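(* For any $b,c,d\in\mathbb C\setminus\{-1,-2,-3,\dots\}$, with $f$ as defined in the context: (1) $f(b,b)=1$; (2) $f(b,c)f(c,d)=f(b,d)$; (3) $\displaystyle f(b,c)=\left(\frac{c+1}{b+1}\right)f\left(\frac b2,\frac c2\right)f\left(\frac{c+1}{2},\frac{b+1}{2}\right)$.
   Context: Let $u_n=(-1)^{s_2(n)}$, where $s_2(n)$ is the sum of the binary digits of the non-negative integer $n$ (Thue–Morse sequence with values $\pm1$). For $b,c\in\mathbb C\setminus\{-1,-2,-3,\dots\}$ define $f(b,c)=\prod_{n=1}^\infty\left(\frac{n+b}{n+c}\right)^{u_n}$ (limit of partial products; this product converges for all such $b,c$). *)

From Stdlib Require Import Reals ZArith NArith.
From Coquelicot Require Import Coquelicot.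
Open Scope C_scope.

Fixpoint popcount_pos (p : positive) : nat :=
  match p with
  | xH => 1
  | xO q => popcount_pos q
  | xI q => S (popcount_pos q)
  end.

Definition s2 (n : nat) : nat :=
  match N.of_nat n with
  | N0 => 0
  | Npos p => popcount_pos p
  end.

Definition u (n : nat) : Z := ((-1) ^ Z.of_nat (s2 n))%Z.

(* x^{u_n}: since u_n is +1 or -1, this is x or x^{-1}. *)
Definition cpow_u (x : C) (n : nat) : C :=
  if Z.eqb (u n) 1 then x else Cinv x.

Definition not_neg_int (z : C) : Prop :=
  forall k : nat, z <> RtoC (- INR (S k)).

Fixpoint pprod (b c : C) (N : nat) : C :=
  match N with
  | O => 1
  | S m => pprod b c m * cpow_u ((RtoC (INR (S m)) + b) / (RtoC (INR (S m)) + c)) (S m)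
  end.

Definition fTM (b c : C) : C :=
  @lim C_CompleteNormedModule (filtermap (pprod b c) eventually).

(* Write f(b,c) as the limit of the partial products P_N = prod_(n <= N) x_n^(u_n) with
   x_n = (n+b)/(n+c). Since u_(2k) = u_k and u_(2k+1) = -u_k, the factors of index 2k and
   2k+1 combine into the single power ((2k+b)(2k+1+c) / ((2k+c)(2k+1+b)))^(u_k), which differs
   from 1 by O(|b-c|/k^2). Hence the odd partial products form an absolutely convergent
   product, and the even ones differ from them by one factor tending to 1; this works for all
   b and c. The same pairing, read through 2k+b = 2(k+b/2) and 2k+1+c = 2(k+(c+1)/2), splits
   P_(2M+1) exactly into (c+1)/(b+1) times partial products of f(b/2,c/2) and
   f((c+1)/2,(b+1)/2), while (1) and (2) already hold for the partial products; all three
   identities pass to the limit. *)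

From Stdlib Require Import Reals ZArith NArith Lia Lra.
From Coquelicot Require Import Coquelicot.
Open Scope C_scope.

(** * Thue-Morse signs *)

Lemma s2_double j : s2 (2 * j) = s2 j.
Proof. unfold s2. rewrite Nat2N.inj_double. now destruct (N.of_nat j). Qed.

Lemma s2_succ_double j : s2 (S (2 * j)) = S (s2 j).
Proof. unfold s2. rewrite Nat2N.inj_succ_double. now destruct (N.of_nat j). Qed.

Lemma u_double j : u (2 * j) = u j.
Proof. unfold u. now rewrite s2_double. Qed.

Lemma u_succ_double j : u (S (2 * j)) = (- u j)%Z.
Proof. unfold u. rewrite s2_succ_double, Nat2Z.inj_succ, Z.pow_succ_r by lia. ring. Qed.

Lemma u_cases n : u n = 1%Z \/ u n = (-1)%Z.
Proof.
  unfold u. induction (s2 n) as [|k IH]; [now left|].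
  rewrite Nat2Z.inj_succ, Z.pow_succ_r by lia.
  destruct IH as [-> | ->]; [right | left]; reflexivity.
Qed.

(* Coquelicot's inverse is total with [/ 0 = 0], so [cpow_u] commutes with products and
   inverses without side conditions. *)
Lemma Cinv_0 : / (0 : C) = 0.
Proof.
  apply injective_projections; simpl; unfold Rdiv;
    rewrite ?Rmult_0_l, ?Rplus_0_l, ?Rinv_0; ring.
Qed.

Lemma Cinv_mult (x y : C) : / (x * y) = / x * / y.
Proof.
  destruct (Ceq_dec x 0) as [-> | Hx]; [now rewrite Cmult_0_l, Cinv_0, Cmult_0_l|].
  destruct (Ceq_dec y 0) as [-> | Hy]; [now rewrite Cmult_0_r, Cinv_0, Cmult_0_r|].
  field; auto.
Qed.

Lemma Cinv_inv (x : C) : / / x = x.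
Proof.
  destruct (Ceq_dec x 0) as [-> | Hx]; [now rewrite !Cinv_0|].
  field; auto.
Qed.

Lemma cpow_u_one n : cpow_u 1 n = 1.
Proof. unfold cpow_u. destruct (u n =? 1)%Z; [reflexivity | field]. Qed.

Lemma cpow_u_mul (x y : C) n : cpow_u x n * cpow_u y n = cpow_u (x * y) n.
Proof. unfold cpow_u. destruct (u n =? 1)%Z; [reflexivity | now rewrite Cinv_mult]. Qed.

Lemma cpow_u_double (x : C) j : cpow_u x (2 * j) = cpow_u x j.
Proof. unfold cpow_u. now rewrite u_double. Qed.

Lemma cpow_u_succ_double (x : C) j : cpow_u x (S (2 * j)) = cpow_u (/ x) j.
Proof.
  unfold cpow_u. rewrite u_succ_double.
  destruct (u_cases j) as [-> | ->]; simpl; [reflexivity | now rewrite Cinv_inv].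
Qed.

Lemma cpow_u_div_sub1_le (w z : C) (r : R) n :
  0 < r -> r <= Cmod w -> r <= Cmod z -> Cmod (cpow_u (w / z) n - 1) <= Cmod (w - z) / r.
Proof.
  intros Hr Hw Hz.
  assert (w <> 0) by (intros ->; rewrite Cmod_0 in Hw; lra).
  assert (z <> 0) by (intros ->; rewrite Cmod_0 in Hz; lra).
  assert (Hdiv : forall y, r <= Cmod y -> Cmod (w - z) / Cmod y <= Cmod (w - z) / r).
  { intros y Hy. apply Rmult_le_compat_l; [apply Cmod_ge_0 | apply Rinv_le_contravar; lra]. }
  unfold cpow_u. destruct (u n =? 1)%Z.
  - replace (w / z - 1) with ((w - z) / z) by (field; auto).
    rewrite Cmod_div by auto. auto.
  - replace (/ (w / z) - 1) with (- (w - z) / w) by (field; auto).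
    rewrite Cmod_div, Cmod_opp by auto. auto.
Qed.

(** * Limits of complex sequences *)

(* [locally] on [C] is built from product balls, [filterlim_mult] uses the balls of the
   absolute value of [C_AbsRing]; [locally_C] identifies the two filters. *)
Lemma filterlim_Cmult {T} (F : (T -> Prop) -> Prop) (f g : T -> C) (x y : C) :
  Filter F -> filterlim f F (locally x) -> filterlim g F (locally y) ->
  filterlim (fun t => f t * g t) F (locally (x * y)).
Proof.
  intros HF Hf Hg P HP. apply locally_C in HP.
  revert P HP.
  apply (filterlim_comp_2 (G := locally (T := AbsRing_UniformSpace C_AbsRing) x)
    (H := locally (T := AbsRing_UniformSpace C_AbsRing) y) f g Cmult);
    [| | exact (filterlim_mult (K := C_AbsRing) x y)].
  - intros P HP. apply Hf, locally_C, HP.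
  - intros P HP. apply Hg, locally_C, HP.
Qed.

Lemma filterlim_odd_even {T} (F : (T -> Prop) -> Prop) (f : nat -> T) :
  filterlim (fun m => f (S (2 * m))) eventually F ->
  filterlim (fun m => f (2 * S m)%nat) eventually F ->
  filterlim f eventually F.
Proof.
  intros Hodd Heven P HP.
  destruct (Hodd P HP) as [N1 H1], (Heven P HP) as [N2 H2].
  exists (S (2 * (N1 + N2))). intros n Hn.
  destruct (Nat.Even_or_Odd n) as [[m ->] | [m ->]].
  - destruct m as [|m]; [lia|]. apply H2. lia.
  - rewrite Nat.add_1_r. apply H1. lia.
Qed.

Lemma filterlim_lim_C (f : nat -> C) (l : C) :
  filterlim f eventually (locally l) ->
  filterlim f eventually (locally (@lim C_CompleteNormedModule (filtermap f eventually))).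
Proof.
  intros Hl. apply filterlim_locally. intros eps.
  apply (@complete_cauchy C_CompleteNormedModule (filtermap f eventually)).
  - apply filtermap_proper_filter, eventually_filter.
  - intros e. exists l. exact (proj1 (filterlim_locally f l) Hl e).
Qed.

Lemma filterlim_of_Cmod_bound (f : nat -> C) (l : C) (g : nat -> R) N :
  (forall n, (N <= n)%nat -> Cmod (f n - l) <= g n) -> is_lim_seq g 0 ->
  filterlim f eventually (locally l).
Proof.
  intros Hf Hg. apply filterlim_locally. intros eps. apply is_lim_seq_spec in Hg. destruct (Hg eps) as [M HM].
  exists (max N M). intros n Hn. specialize (HM n ltac:(lia)). specialize (Hf n ltac:(lia)).
  rewrite Rminus_0_r in HM. apply Rabs_lt_between in HM.
  apply C_NormedModule_mixin_compat1. change (Cmod (f n - l) < eps). lra.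
Qed.

Lemma ex_filterlim_of_cauchy_bound (f : nat -> C) (g : nat -> R) N :
  (forall m n, (N <= m <= n)%nat -> Cmod (f n - f m) <= g m) -> is_lim_seq g 0 ->
  exists l, filterlim f eventually (locally l).
Proof.
  intros Hf Hg. apply (filterlim_locally_cauchy (U := C_CompleteNormedModule) (F := eventually) f).
  intros eps. apply is_lim_seq_spec in Hg. destruct (Hg (pos_div_2 eps)) as [M HM].
  set (m := max N M). specialize (HM m ltac:(lia)). simpl in HM.
  rewrite Rminus_0_r in HM. apply Rabs_lt_between in HM.
  exists (fun n => (m <= n)%nat). split; [now exists m|].
  intros p q Hp Hq. apply C_NormedModule_mixin_compat1.
  change (Cmod (f q - f p) < eps).
  replace (f q - f p) with ((f q - f m) + - (f p - f m)) by ring.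
  eapply Rle_lt_trans; [apply Cmod_triangle|]. rewrite Cmod_opp.
  pose proof (Hf m q ltac:(lia)). pose proof (Hf m p ltac:(lia)). lra.
Qed.

(** * Finite and infinite products *)

Fixpoint cprod (a : nat -> C) (n : nat) : C :=
  match n with
  | O => 1
  | S m => cprod a m * a m
  end.

Lemma cprod_ext (a b : nat -> C) n : (forall i, a i = b i) -> cprod a n = cprod b n.
Proof. intros E. induction n as [|n IH]; simpl; congruence. Qed.

Lemma cprod_one n : cprod (fun _ => 1) n = 1.
Proof. induction n as [|n IH]; simpl; [|rewrite IH]; ring. Qed.

Lemma cprod_mul (a b : nat -> C) n :
  cprod (fun i => a i * b i) n = cprod a n * cprod b n.
Proof. induction n as [|n IH]; simpl; [|rewrite IH]; ring. Qed.

Lemma cprod_add (a : nat -> C) m k :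
  cprod a (m + k) = cprod a m * cprod (fun i => a (m + i)%nat) k.
Proof.
  induction k as [|k IH]; simpl.
  - rewrite Nat.add_0_r. ring.
  - rewrite Nat.add_succ_r. simpl. rewrite IH. ring.
Qed.

Lemma cprod_pairs (a : nat -> C) n :
  cprod a (2 * n) = cprod (fun i => a (2 * i)%nat * a (S (2 * i))) n.
Proof.
  induction n as [|n IH]; [reflexivity|].
  replace (2 * S n)%nat with (S (S (2 * n))) by lia.
  cbn [cprod]. rewrite IH. ring.
Qed.

Lemma Cmod_le_1_plus_sub1 (z : C) : Cmod z <= 1 + Cmod (z - 1).
Proof.
  replace z with ((z - 1) + 1) at 1 by ring.
  eapply Rle_trans; [apply Cmod_triangle|]. rewrite Cmod_1. lra.
Qed.

Lemma exp_le (x y : R) : x <= y -> exp x <= exp y.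
Proof. intros [H | ->]; [left; now apply exp_increasing | apply Rle_refl]. Qed.

Lemma cprod_sub1_le (a : nat -> C) (g : nat -> R) k :
  (forall i, (i < k)%nat -> Cmod (a i - 1) <= g i - g (S i)) ->
  Cmod (cprod a k - 1) <= exp (g O - g k) - 1.
Proof.
  induction k as [|k IH]; intros Ha; simpl.
  - replace (1 - 1) with (RtoC 0) by ring. rewrite Cmod_0, Rminus_diag, exp_0. lra.
  - specialize (IH (fun i Hi => Ha i ltac:(lia))). specialize (Ha k ltac:(lia)).
    set (P := cprod a k) in *.
    replace (P * a k - 1) with (P * (a k - 1) + (P - 1)) by ring.
    assert (HP : Cmod P <= exp (g O - g k)) by (pose proof (Cmod_le_1_plus_sub1 P); lra).
    assert (Hexp : 1 + (g k - g (S k)) <= exp (g k - g (S k))) by apply exp_ineq1_le.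
    replace (g O - g (S k))%R with ((g O - g k) + (g k - g (S k)))%R by ring.
    rewrite exp_plus.
    eapply Rle_trans; [apply Cmod_triangle|]. rewrite Cmod_mult.
    pose proof (Cmod_ge_0 (a k - 1)). pose proof (exp_pos (g O - g k)).
    nra.
Qed.

Lemma cprod_tail_sub1_le (a : nat -> C) (g : nat -> R) m k :
  (forall i, (m <= i)%nat -> Cmod (a i - 1) <= g i - g (S i)) ->
  Cmod (cprod (fun i => a (m + i)%nat) k - 1) <= exp (g m - g (m + k)%nat) - 1.
Proof.
  intros Ha. pose proof (cprod_sub1_le (fun i => a (m + i)%nat) (fun i => g (m + i)%nat) k) as H.
  cbv beta in H. rewrite Nat.add_0_r in H. apply H. intros i _. rewrite Nat.add_succ_r. apply Ha. lia.
Qed.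

(* [|P_n - P_m| = |P_N| |T_(N,m)| |T_(m,n) - 1| <= |P_N| e^(g N - g m) (e^(g m - g n) - 1)
   = |P_N| e^(g N) (e^(- g n) - e^(- g m))], where [T] are the tail products, and
   [e^(- g n) <= 1], [1 - e^(- g m) <= g m]. *)
Lemma cprod_sub_le (a : nat -> C) (g : nat -> R) N m n :
  (forall i, (N <= i)%nat -> Cmod (a i - 1) <= g i - g (S i)) -> 0 <= g n -> (N <= m <= n)%nat ->
  Cmod (cprod a n - cprod a m) <= Cmod (cprod a N) * exp (g N) * g m.
Proof.
  intros Ha Hgn Hmn.
  pose proof (cprod_tail_sub1_le a g N (m - N) ltac:(intros i Hi; apply Ha; lia)) as HT1.
  pose proof (cprod_tail_sub1_le a g m (n - m) ltac:(intros i Hi; apply Ha; lia)) as HT2.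
  rewrite Nat.add_sub_assoc, Nat.add_comm, Nat.add_sub in HT1, HT2 by lia.
  set (T1 := cprod (fun i => a (N + i)%nat) (m - N)) in HT1.
  set (T2 := cprod (fun i => a (m + i)%nat) (n - m)) in HT2.
  assert (Em : cprod a m = cprod a N * T1) by (unfold T1; rewrite <- cprod_add; f_equal; lia).
  assert (En : cprod a n = cprod a m * T2) by (unfold T2; rewrite <- cprod_add; f_equal; lia).
  rewrite En, Em.
  replace (cprod a N * T1 * T2 - cprod a N * T1) with (cprod a N * (T1 * (T2 - 1))) by ring.
  rewrite !Cmod_mult, Rmult_assoc.
  apply Rmult_le_compat_l; [apply Cmod_ge_0|].
  pose proof (Cmod_le_1_plus_sub1 T1).
  unfold Rminus in HT1, HT2. rewrite exp_plus in HT1, HT2.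
  assert (Einv : (exp (- g m) * exp (g m) = 1)%R) by (rewrite <- exp_plus, Rplus_opp_l; apply exp_0).
  assert (Hn : exp (- g n) <= 1) by (rewrite <- exp_0; apply exp_le; lra).
  assert (Hm : 1 - g m <= exp (- g m)) by apply exp_ineq1_le.
  pose proof (exp_pos (g N)). pose proof (Cmod_ge_0 (T2 - 1)).
  apply Rle_trans with (exp (g N) * exp (- g m) * (exp (g m) * exp (- g n) - 1))%R.
  - apply Rmult_le_compat; try apply Cmod_ge_0; lra.
  - replace (exp (g N) * exp (- g m) * (exp (g m) * exp (- g n) - 1))%R
      with (exp (g N) * (exp (- g m) * exp (g m) * exp (- g n) - exp (- g m)))%R by ring.
    rewrite Einv, Rmult_1_l. apply Rmult_le_compat_l; lra.
Qed.

Lemma cprod_converges (a : nat -> C) (g : nat -> R) N :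
  (forall i, (N <= i)%nat -> Cmod (a i - 1) <= g i - g (S i)) -> is_lim_seq g 0 ->
  exists l, filterlim (cprod a) eventually (locally l).
Proof.
  intros Ha Hg.
  assert (Hg0 : forall i, (N <= i)%nat -> 0 <= g i).
  { intros i Hi. replace i with ((i - N) + N)%nat by lia.
    apply (is_lim_seq_decr_compare (fun k => g (k + N)%nat)); [now apply is_lim_seq_incr_n|].
    intros k. pose proof (Cmod_ge_0 (a (k + N)%nat - 1)). pose proof (Ha (k + N)%nat ltac:(lia)).
    simpl. lra. }
  set (K := (Cmod (cprod a N) * exp (g N))%R).
  apply (ex_filterlim_of_cauchy_bound _ (fun m => K * g m)%R N).
  - intros m n Hmn. apply cprod_sub_le; auto. apply Hg0. lia.
  - replace (Finite 0) with (Rbar_mult K 0) by (simpl; f_equal; ring).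
    now apply is_lim_seq_scal_l.
Qed.

(** * The partial products of f *)

Definition tm_factor (b c : C) (n : nat) : C :=
  cpow_u ((RtoC (INR n) + b) / (RtoC (INR n) + c)) n.

Lemma pprod_cprod b c N : pprod b c N = cprod (fun i => tm_factor b c (S i)) N.
Proof. induction N as [|N IH]; simpl; [|rewrite IH]; reflexivity. Qed.

Lemma RtoC_INR_double k : RtoC (INR (2 * k)) = 2 * RtoC (INR k).
Proof. rewrite mult_INR, RtoC_mult. reflexivity. Qed.

Lemma RtoC_INR_S k : RtoC (INR (S k)) = RtoC (INR k) + 1.
Proof. now rewrite S_INR, RtoC_plus. Qed.

Lemma not_neg_int_add_INR b n : not_neg_int b -> (0 < n)%nat -> RtoC (INR n) + b <> 0.
Proof.
  intros hb Hn E. destruct n as [|n]; [lia|]. apply (hb n).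
  replace b with (RtoC (INR (S n)) + b - RtoC (INR (S n))) by ring.
  rewrite E, RtoC_opp. ring.
Qed.

Lemma tm_factor_diag b k : not_neg_int b -> (0 < k)%nat -> tm_factor b b k = 1.
Proof.
  intros hb Hk. pose proof (not_neg_int_add_INR b k hb Hk).
  unfold tm_factor. rewrite <- (cpow_u_one k). f_equal. field. auto.
Qed.

Lemma tm_factor_mul b c d k : not_neg_int c -> (0 < k)%nat ->
  tm_factor b c k * tm_factor c d k = tm_factor b d k.
Proof.
  intros hc Hk. pose proof (not_neg_int_add_INR c k hc Hk).
  unfold tm_factor. rewrite cpow_u_mul. f_equal. unfold Cdiv.
  replace ((RtoC (INR k) + b) * / (RtoC (INR k) + c) * ((RtoC (INR k) + c) * / (RtoC (INR k) + d)))
    with ((RtoC (INR k) + b) * (/ (RtoC (INR k) + c) * (RtoC (INR k) + c)) * / (RtoC (INR k) + d)) by ring.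
  rewrite Cinv_l by auto. ring.
Qed.

Lemma tm_factor_one b c : not_neg_int b -> not_neg_int c -> tm_factor b c 1 = (c + 1) / (b + 1).
Proof.
  intros hb hc. pose proof (not_neg_int_add_INR b 1 hb ltac:(lia)) as Hb.
  pose proof (not_neg_int_add_INR c 1 hc ltac:(lia)) as Hc.
  unfold tm_factor, cpow_u. simpl in *. field.
  split; [contradict Hb; rewrite <- Hb | contradict Hc; rewrite <- Hc]; ring.
Qed.

Lemma tm_factor_even b c k : not_neg_int c -> (0 < k)%nat ->
  tm_factor b c (2 * k) = tm_factor (b / 2) (c / 2) k.
Proof.
  intros hc Hk. pose proof (not_neg_int_add_INR c (2 * k) hc ltac:(lia)) as Hc.
  unfold tm_factor. rewrite cpow_u_double, RtoC_INR_double in *. f_equal.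
  field. contradict Hc. rewrite <- Hc. ring.
Qed.

Lemma tm_factor_odd b c k : not_neg_int b -> not_neg_int c -> (0 < k)%nat ->
  tm_factor b c (S (2 * k)) = tm_factor ((c + 1) / 2) ((b + 1) / 2) k.
Proof.
  intros hb hc Hk. pose proof (not_neg_int_add_INR b (S (2 * k)) hb ltac:(lia)) as Hb.
  pose proof (not_neg_int_add_INR c (S (2 * k)) hc ltac:(lia)) as Hc.
  unfold tm_factor. rewrite cpow_u_succ_double, RtoC_INR_S, RtoC_INR_double in *. f_equal.
  field. split; [contradict Hb; rewrite <- Hb | contradict Hc; rewrite <- Hc]; ring.
Qed.

Lemma pprod_diag b N : not_neg_int b -> pprod b b N = 1.
Proof.
  intros hb. rewrite pprod_cprod, <- (cprod_one N).
  apply cprod_ext. intros i. apply tm_factor_diag; [auto | lia].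
Qed.

Lemma pprod_mul b c d N : not_neg_int c -> pprod b c N * pprod c d N = pprod b d N.
Proof.
  intros hc. rewrite !pprod_cprod, <- cprod_mul.
  apply cprod_ext. intros i. apply tm_factor_mul; [auto | lia].
Qed.

Lemma pprod_odd b c M : pprod b c (S (2 * M)) =
  tm_factor b c 1 * cprod (fun i => tm_factor b c (2 * S i) * tm_factor b c (S (2 * S i))) M.
Proof.
  rewrite pprod_cprod. change (S (2 * M)) with (1 + 2 * M)%nat.
  rewrite cprod_add, cprod_pairs. simpl (cprod _ 1). rewrite Cmult_1_l. f_equal.
  apply cprod_ext. intros i. f_equal; f_equal; lia.
Qed.

Lemma pprod_odd_split b c M : not_neg_int b -> not_neg_int c ->
  pprod b c (S (2 * M)) =
  (c + 1) / (b + 1) * pprod (b / 2) (c / 2) M * pprod ((c + 1) / 2) ((b + 1) / 2) M.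
Proof.
  intros hb hc. rewrite pprod_odd, tm_factor_one, !pprod_cprod, <- Cmult_assoc, <- cprod_mul by auto.
  f_equal. apply cprod_ext. intros i. rewrite tm_factor_even, tm_factor_odd by (auto; lia). reflexivity.
Qed.

Lemma Cmod_RtoC_add_ge (x : R) (z : C) : x - Cmod z <= Cmod (RtoC x + z).
Proof.
  pose proof (Cmod_triangle (RtoC x + z) (- z)) as H.
  replace (RtoC x + z + - z) with (RtoC x) in H by ring.
  rewrite Cmod_opp, Cmod_R in H. pose proof (Rle_abs x). lra.
Qed.

Lemma tm_factor_even_sub1_le b c k : (0 < k)%nat -> Cmod b <= INR k -> Cmod c <= INR k ->
  Cmod (tm_factor b c (2 * k) - 1) <= Cmod (b - c) / INR k.
Proof.
  intros Hk Hb Hc. assert (0 < INR k) by (apply lt_0_INR; lia).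
  assert (E : INR (2 * k) = (2 * INR k)%R) by (rewrite mult_INR; reflexivity).
  pose proof (Cmod_RtoC_add_ge (INR (2 * k)) b). pose proof (Cmod_RtoC_add_ge (INR (2 * k)) c).
  unfold tm_factor. set (n := RtoC (INR (2 * k))) in *.
  replace (b - c) with ((n + b) - (n + c)) by ring.
  apply cpow_u_div_sub1_le; lra.
Qed.

Lemma tm_pair_sub1_le b c k : (0 < k)%nat -> Cmod b <= INR k -> Cmod c <= INR k ->
  Cmod (tm_factor b c (2 * k) * tm_factor b c (S (2 * k)) - 1)
  <= Cmod (b - c) / INR k - Cmod (b - c) / INR (S k).
Proof.
  intros Hk Hb Hc. assert (Hk0 : 0 < INR k) by (apply lt_0_INR; lia).
  pose proof (Cmod_RtoC_add_ge (INR (2 * k)) b) as L1.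
  pose proof (Cmod_RtoC_add_ge (INR (2 * k)) c) as L2.
  pose proof (Cmod_RtoC_add_ge (INR (S (2 * k))) b) as L3.
  pose proof (Cmod_RtoC_add_ge (INR (S (2 * k))) c) as L4.
  assert (E : (INR (S (2 * k)) = INR (2 * k) + 1 /\ INR (2 * k) = 2 * INR k)%R).
  { rewrite S_INR, mult_INR. split; reflexivity. }
  unfold tm_factor. rewrite cpow_u_double, cpow_u_succ_double, cpow_u_mul.
  set (n := RtoC (INR (2 * k))) in *. set (n1 := RtoC (INR (S (2 * k)))) in *.
  assert (Hnz : forall z, 0 < Cmod z -> z <> 0) by (intros z Hz ->; rewrite Cmod_0 in Hz; lra).
  replace ((n + b) / (n + c) * / ((n1 + b) / (n1 + c)))
    with ((n + b) * (n1 + c) / ((n + c) * (n1 + b))) by (field; repeat split; apply Hnz; lra).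
  replace (Cmod (b - c) / INR k - Cmod (b - c) / INR (S k))%R
    with (Cmod ((n + b) * (n1 + c) - (n + c) * (n1 + b)) / (INR k * INR (S k)))%R.
  2:{ replace ((n + b) * (n1 + c) - (n + c) * (n1 + b)) with ((n1 - n) * (b - c)) by ring.
      unfold n, n1. rewrite RtoC_INR_S. replace (RtoC (INR (2 * k)) + 1 - RtoC (INR (2 * k))) with (RtoC 1) by ring.
      rewrite Cmod_mult, Cmod_1, S_INR. field. lra. }
  rewrite S_INR.
  apply cpow_u_div_sub1_le; rewrite ?Cmod_mult; [nra | |]; apply Rmult_le_compat; lra.
Qed.

Lemma is_lim_seq_div_INR_S (K : R) : is_lim_seq (fun i => K / INR (S i))%R 0.
Proof.
  replace (Finite 0) with (Rbar_mult K (Rbar_inv p_infty)) by (simpl; f_equal; ring).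
  apply is_lim_seq_scal_l, (is_lim_seq_incr_1 (fun i => / INR i)%R).
  apply is_lim_seq_inv; [apply is_lim_seq_INR | discriminate].
Qed.

Lemma pprod_converges b c : exists l, filterlim (pprod b c) eventually (locally l).
Proof.
  set (K := Cmod (b - c)). set (g i := (K / INR (S i))%R).
  destruct (INR_archimed 1 (Cmod b + Cmod c)) as [J HJ]; [lra|].
  assert (HbJ : forall i, (J <= i)%nat -> Cmod b <= INR (S i) /\ Cmod c <= INR (S i)).
  { intros i Hi. apply le_INR in Hi. rewrite S_INR.
    pose proof (Cmod_ge_0 b). pose proof (Cmod_ge_0 c). lra. }
  set (a i := tm_factor b c (2 * S i) * tm_factor b c (S (2 * S i))).
  destruct (cprod_converges a g J) as [l Hl].
  - intros i Hi. destruct (HbJ i Hi). apply tm_pair_sub1_le; auto; lia.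
  - apply is_lim_seq_div_INR_S.
  - assert (Hodd : filterlim (fun M => pprod b c (S (2 * M))) eventually
                      (locally (tm_factor b c 1 * l))).
    { apply (filterlim_ext (fun M => tm_factor b c 1 * cprod a M)); [intros; now rewrite pprod_odd|].
      apply filterlim_Cmult; [apply eventually_filter | apply filterlim_const | exact Hl]. }
    exists (tm_factor b c 1 * l). apply filterlim_odd_even; [exact Hodd|].
    rewrite <- (Cmult_1_r (tm_factor b c 1 * l)).
    apply (filterlim_ext (fun M => pprod b c (S (2 * M)) * tm_factor b c (2 * S M))).
    { intros M. replace (2 * S M)%nat with (S (S (2 * M))) by lia. reflexivity. }
    apply filterlim_Cmult; [apply eventually_filter | exact Hodd |].
    apply (filterlim_of_Cmod_bound _ _ g J); [|apply is_lim_seq_div_INR_S].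
    intros i Hi. destruct (HbJ i Hi). apply tm_factor_even_sub1_le; auto; lia.
Qed.

Lemma pprod_fTM b c : filterlim (pprod b c) eventually (locally (fTM b c)).
Proof. destruct (pprod_converges b c) as [l Hl]. exact (filterlim_lim_C _ l Hl). Qed.

Lemma fTM_unique b c l : filterlim (pprod b c) eventually (locally l) -> fTM b c = l.
Proof.
  apply (filterlim_locally_unique (K := C_AbsRing) (V := C_NormedModule) (pprod b c)).
  apply pprod_fTM.
Qed.

Theorem lemma2 (b c d : C)
  (hb : not_neg_int b) (hc : not_neg_int c) (hd : not_neg_int d) :
  fTM b b = 1 /\
  fTM b c * fTM c d = fTM b d /\
  fTM b c = ((c + 1) / (b + 1)) * fTM (b / 2) (c / 2) * fTM ((c + 1) / 2) ((b + 1) / 2).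
Proof.
  split; [|split].
  - apply fTM_unique, (filterlim_ext (fun _ => 1 : C)); [|apply filterlim_const].
    intros N. symmetry. now apply pprod_diag.
  - symmetry. apply fTM_unique, (filterlim_ext (fun N => pprod b c N * pprod c d N)).
    + intros N. now apply pprod_mul.
    + apply filterlim_Cmult; [apply eventually_filter | apply pprod_fTM | apply pprod_fTM].
  - apply (filterlim_locally_unique (K := C_AbsRing) (V := C_NormedModule) (F := eventually)
             (fun M => pprod b c (S (2 * M)))).
    + apply (filterlim_comp _ _ _ (fun M => S (2 * M)) (pprod b c) _ eventually);
        [apply eventually_subseq; intros; lia | apply pprod_fTM].
    + apply (filterlim_ext (fun M => (c + 1) / (b + 1) * pprod (b / 2) (c / 2) M
                                     * pprod ((c + 1) / 2) ((b + 1) / 2) M)).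
      { intros M. symmetry. now apply pprod_odd_split. }
      apply filterlim_Cmult; [apply eventually_filter | | apply pprod_fTM].
      apply filterlim_Cmult; [apply eventually_filter | apply filterlim_const | apply pprod_fTM].
Qed.
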